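(* Let $s\ge1$ be a fixed integer, let $K_n,P_n$ be positive integers with $s\le K_n\le P_n$ and $P_n=\Omega(n)$, and let $q_n$ be the edge probability of $G_s(n,K_n,P_n)$, i.e., the probability that two given vertices share at least $s$ items. (a) If there is a sequence $\gamma_n$ with $|\gamma_n|=O(\ln\ln n)$ and $\frac{1}{s!}\cdot\frac{K_n^{2s}}{P_n^{s}}=\frac{\ln n+\gamma_n}{n}$, then $q_n\sim\frac{1}{s!}\cdot\frac{K_n^{2s}}{P_n^{s}}$ and $\big|q_n-\frac{1}{s!}\cdot\frac{K_n^{2s}}{P_n^{s}}\big|=o\big(\frac1n\big)$. (b) If there is a sequence $\gamma_n$ with $|\gamma_n|=O(\ln\ln n)$ and $q_n=\frac{\ln n+\gamma_n}{n}$, then $q_n\sim\frac{1}{s!}\cdot\frac{K_n^{2s}}{P_n^{s}}$ and $\big|q_n-\frac{1}{s!}\cdot\frac{K_n^{2s}}{P_n^{s}}\big|=o\big(\frac1n\big)$.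
   Context: The uniform random $s$-intersection graph $G_s(n,K_n,P_n)$ has $n$ vertices; each vertex independently selects a set of $K_n$ distinct items uniformly at random from a pool of $P_n$ distinct items, and two vertices are adjacent iff their item sets share at least $s$ items. $f_n\sim g_n$ means $f_n/g_n\to1$ as $n\to\infty$. *)

From mathcomp Require Import all_boot.
From Stdlib Require Import Reals.

Set Implicit Arguments.
Unset Strict Implicit.
Unset Printing Implicit Defensive.

Definition overlap_pairs (s K P : nat) : nat :=
  #|[set AB : {set 'I_P} * {set 'I_P} |
      [&& #|AB.1| == K, #|AB.2| == K & s <= #|AB.1 :&: AB.2| ] ]|.

Open Scope R_scope.

(* Edge probability q of G_s(n,K,P): two vertices independently pick uniform
   K-subsets of a pool of P items; probability that they share >= s items. *)
Definition edge_prob (s K P : nat) : R :=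
  INR (overlap_pairs s K P) / (INR ('C(P, K)) ^ 2).

Definition approx_prob (s K P : nat) : R :=
  / INR (s`!) * (INR K ^ (2 * s) / INR P ^ s).

Definition asymp_eq (f g : nat -> R) : Prop :=
  Un_cv (fun n => f n / g n) 1.

Definition little_o_inv_n (f : nat -> R) : Prop :=
  Un_cv (fun n => INR n * Rabs (f n)) 0.

Definition bigO_lnln (g : nat -> R) : Prop :=
  exists C N, forall n : nat, (N <= n)%nat -> Rabs (g n) <= C * ln (ln (INR n)).

Definition bigOmega_n (P : nat -> nat) : Prop :=
  exists c, 0 < c /\ exists N, forall n : nat, (N <= n)%nat -> c * INR n <= INR (P n).

(* Write c_u = meet_card P K u = C(K,u) C(P-K,K-u) for the number of K-subsets of
   the pool meeting a fixed K-subset in exactly u items, so that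
   q = (sum_{u >= s} c_u) / C(P,K) and, by Vandermonde, sum_u c_u = C(P,K).
   Since c_{u+1} / c_u <= K^2 / (P - 2K), when K^2 = o(P) the sum is its first term
   c_s up to a factor 1 + O(K^2/P), and a falling-factorial computation gives
   c_s / C(P,K) = a (1 + O(s^2/P + s^2/K + K^2/P)) with a = K^{2s} / (s! P^s).
   Hence |q - a| <= a E with E = O(K^2/P + s^2/P + s^2/K).
   In case (a), n a lies between constants and 2 ln n; then (K^2/P)^s = s! a and
   P = Omega(n) make K^2/P, s^2/P and 1/K all o(1 / ln n), so n |q - a| <= n a E -> 0
   and q / a -> 1.  In case (b) the same holds for n q; first the dense regime
   16 K^2 > P is ruled out, because there the terms c_u with u < s are dominated by
   c_s and q would stay above a positive constant, and then a and q agree up to a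
   factor 2, which reduces (b) to (a). *)

From Stdlib Require Import Reals Lra Lia Psatz.
From mathcomp Require Import all_boot zify.
From Coquelicot Require Import Rcomplements Hierarchy.

Set Implicit Arguments.
Unset Strict Implicit.
Unset Printing Implicit Defensive.

Section Overlaps.
Local Open Scope nat_scope.

Lemma leq_ffactl m n k : m <= n -> m ^_ k <= n ^_ k.
Proof.
move=> mn; elim: k => [|k IH]; first by rewrite !ffactn0.
by rewrite !ffactnSr leq_mul // leq_sub2r.
Qed.

Lemma ffact_leq_expn n k : n ^_ k <= n ^ k.
Proof.
elim: k => [|k IH]; first by rewrite ffactn0.
by rewrite ffactnSr expnSr leq_mul // leq_subr.
Qed.

Lemma ffact_cut n m k : k <= m -> n ^_ m = n ^_ k * (n - k) ^_ (m - k).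
Proof.
elim: k n m => [|k IH] n [|m] // km; first by rewrite mul1n !subn0.
by rewrite !ffactnS IH // mulnA subSS -subn1 -subnDA add1n.
Qed.

Variable P : nat.
Implicit Types A B C D : {set 'I_P}.

Lemma setI_setU_disjoint A C D : C \subset A -> D \subset ~: A ->
  A :&: (C :|: D) = C /\ ~: A :&: (C :|: D) = D.
Proof.
move=> CA DA; have DA' : [disjoint D & A] by rewrite disjoints_subset.
have CA' : [disjoint C & ~: A] by rewrite disjoints_subset setCK.
rewrite !setIUr (setIidPr CA) (setIidPr DA) setIC (disjoint_setI0 DA').
by rewrite setIC (disjoint_setI0 CA') setU0 set0U.
Qed.

Lemma card_meet_sets A m u : u <= m ->
  #|[set B : {set 'I_P} | (#|B| == m) && (#|A :&: B| == u)]| =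
    'C(#|A|, u) * 'C(P - #|A|, m - u).
Proof.
move=> um.
set X1 := [set C : {set 'I_P} | C \subset A & #|C| == u].
set X2 := [set D : {set 'I_P} | D \subset ~: A & #|D| == m - u].
have cardX2 : #|X2| = 'C(P - #|A|, m - u).
  by rewrite cards_draws cardsCs setCK card_ord.
rewrite -cardX2 -(cards_draws A u) -cardsX.
rewrite -(@card_in_imset _ _ (fun CD => CD.1 :|: CD.2) (setX X1 X2)); last first.
  move=> [C1 D1] [C2 D2]; rewrite !in_setX !inE /= => /andP[/andP[CA1 _] /andP[DA1 _]].
  move=> /andP[/andP[CA2 _] /andP[DA2 _]] e.
  have [eC1 eD1] := setI_setU_disjoint CA1 DA1.
  have [eC2 eD2] := setI_setU_disjoint CA2 DA2.
  by congr pair; [rewrite -eC1 e eC2 | rewrite -eD1 e eD2].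
apply: eq_card => B; rewrite inE; apply/andP/imsetP.
- case=> /eqP cardB /eqP cardAB; exists (A :&: B, ~: A :&: B); last first.
    by rewrite /= -setIUl setUCr setTI.
  rewrite in_setX !inE !subsetIl cardAB eqxx /=.
  by rewrite -cardB -(cardsID A B) setDE [B :&: A]setIC [B :&: ~: A]setIC cardAB addKn.
- case=> [[C D]]; rewrite in_setX !inE /=.
  move=> /andP[/andP[CA /eqP cardC] /andP[DA /eqP cardD]] ->.
  have [-> _] := setI_setU_disjoint CA DA; rewrite cardC eqxx; split=> //.
  have CD : [disjoint C & D].
    rewrite disjoints_subset (subset_trans CA) //.
    by rewrite -disjoints_subset disjoint_sym disjoints_subset.
  by rewrite cardsU (disjoint_setI0 CD) cards0 subn0 cardC cardD subnKC.
Qed.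

Definition meet_card K u := 'C(K, u) * 'C(P - K, K - u).

Lemma card_overlap_with s K A : #|A| = K ->
  #|[set B : {set 'I_P} | (#|B| == K) && (s <= #|A :&: B|)]| =
    \sum_(s <= u < K.+1) meet_card K u.
Proof.
move=> cardA; have meetK B : #|A :&: B| < K.+1.
  by rewrite ltnS -cardA subset_leq_card ?subsetIl.
transitivity (\sum_(s <= u < K.+1)
  \sum_(B : {set 'I_P}) ((#|B| == K) && (#|A :&: B| == u) : nat)).
  rewrite exchange_big /= -sum1dep_card big_mkcond /=; apply: eq_bigr => B _.
  rewrite -big_mkcond /=.
  under eq_bigl => u do rewrite [_ == u]eq_sym.
  by rewrite big_nat1_cond_eq meetK andbT andbC.
apply: eq_big_nat => u /andP[_ uK].
have := card_meet_sets A (ltnSE uK); rewrite cardA /meet_card => <-.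
by rewrite -sum1dep_card [RHS]big_mkcond.
Qed.

Lemma overlap_pairsE s K : K <= P ->
  overlap_pairs s K P = 'C(P, K) * \sum_(s <= u < K.+1) meet_card K u.
Proof.
move=> KP; rewrite /overlap_pairs -sum1dep_card big_mkcond /=.
rewrite -(pair_bigA _ (fun A B =>
  if [&& #|A| == K, #|B| == K & s <= #|A :&: B|] then 1 else 0)).
rewrite (bigID (fun A : {set 'I_P} => #|A| == K)) /= [X in _ + X]big1 ?addn0; last first.
  by move=> A /negbTE cardA; rewrite big1 // => B _; rewrite cardA.
rewrite (eq_bigr (fun _ => \sum_(s <= u < K.+1) meet_card K u)) => [|A /eqP cardA].
  rewrite sum_nat_const -[in RHS](card_ord P) -card_draws.
  by congr (_ * _); apply: eq_card => A; rewrite inE.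
rewrite -(card_overlap_with s cardA) -sum1dep_card [RHS]big_mkcond /=.
by apply: eq_bigr => B _; rewrite cardA eqxx.
Qed.

Lemma sum_meet_card K : K <= P -> \sum_(0 <= u < K.+1) meet_card K u = 'C(P, K).
Proof. by move=> KP; rewrite big_mkord (Vandermonde K (P - K) K) subnKC. Qed.

Lemma meet_card_ratio K u : u < K ->
  meet_card K u.+1 * (u.+1 * (P - K - (K - u.+1))) = meet_card K u * (K - u) ^ 2.
Proof.
move=> uK; have eK := mul_bin_left K u.
have eP := mul_bin_left (P - K) (K - u.+1); rewrite subnSK // in eP.
rewrite /meet_card mulnACA (mulnC 'C(K, u.+1)) (mulnC 'C(P - K, K - u.+1)) eK -eP.
by rewrite mulnACA mulnC.
Qed.

Lemma meet_card_ffact s K : s <= K -> K <= P ->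
  meet_card K s * s`! * P ^_ s * (P - s) ^_ (K - s) =
    'C(P, K) * (K ^_ s) ^ 2 * (P - K) ^_ (K - s).
Proof.
move=> sK KP; rewrite -mulnA -ffact_cut //.
apply/eqP; rewrite -(eqn_pmul2r (fact_gt0 (K - s))); apply/eqP.
rewrite /meet_card -{1}(bin_ffact P K) -(bin_ffact (P - K) (K - s)) -(ffact_fact sK).
by rewrite -(bin_ffact K s) -mulnn; lia.
Qed.

Lemma meet_card_succ_le K u : u < K ->
  meet_card K u.+1 * (P - K.*2) <= meet_card K u * K ^ 2.
Proof.
move=> uK; apply: (@leq_trans (meet_card K u.+1 * (u.+1 * (P - K - (K - u.+1))))).
  by rewrite leq_mul2l; apply/orP; right; nia.
by rewrite meet_card_ratio // leq_mul2l leq_exp2r ?leq_subr ?orbT.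
Qed.

Lemma meet_card_pred_le s K u : u < s -> s <= K ->
  meet_card K u * (K - s) ^ 2 <= meet_card K u.+1 * (s * P).
Proof.
move=> us sK; apply: (@leq_trans (meet_card K u * (K - u) ^ 2)).
  by rewrite leq_mul2l leq_exp2r ?orbT //; lia.
by rewrite -meet_card_ratio ?leq_mul2l ?leq_mul ?orbT //; lia.
Qed.

Lemma meet_card_first_le s K : s <= K -> K <= P ->
  meet_card K s * s`! * P ^_ s <= 'C(P, K) * K ^ (2 * s).
Proof.
move=> sK KP; have pos : 0 < (P - s) ^_ (K - s) by rewrite ffact_gt0; lia.
rewrite -(leq_pmul2r pos) meet_card_ffact // leq_mul ?leq_ffactl ?leq_sub2l //.
by rewrite leq_mul2l mulnC expnM leq_exp2r // ffact_leq_expn orbT.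
Qed.
End Overlaps.

Local Open Scope R_scope.

Lemma INR_mul a b : INR (a * b)%N = INR a * INR b.
Proof. by rewrite -mult_INR. Qed.

Lemma INR_add a b : INR (a + b)%N = INR a + INR b.
Proof. by rewrite -plus_INR. Qed.

Lemma INR_exp a b : INR (a ^ b)%N = INR a ^ b.
Proof. by elim: b => [|b IH] //=; rewrite expnS INR_mul IH. Qed.

Lemma INR_sub a b : (b <= a)%N -> INR (a - b)%N = INR a - INR b.
Proof. by move=> /leP h; rewrite -minus_INR. Qed.

Lemma INR_leq a b : (a <= b)%N -> INR a <= INR b.
Proof. by move=> /leP; apply: le_INR. Qed.

Lemma INR_gt0 a : (0 < a)%N -> 0 < INR a.
Proof. by move=> /ltP; apply: lt_0_INR. Qed.

Lemma INR_ge1 a : (0 < a)%N -> 1 <= INR a.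
Proof. exact: INR_leq. Qed.

Lemma leq_of_INR a b : INR a <= INR b -> (a <= b)%N.
Proof. by move=> h; apply/leP; apply: INR_le. Qed.

Lemma ffact_pow_lower N m : (m <= N)%N ->
  INR N ^ m * (INR N - INR m * (INR m - 1)) <= INR (N ^_ m) * INR N.
Proof.
elim: m => [|m IH] mN; first by rewrite ffactn0 /=; lra.
have {}IH := IH (ltnW mN).
rewrite ffactnSr INR_mul (INR_sub (ltnW mN)) S_INR /=.
have hF := pos_INR (N ^_ m); have hm := pos_INR m.
have hG : 0 <= INR N ^ m by apply: pow_le; apply: pos_INR.
have hmN : INR m + 1 <= INR N by rewrite -S_INR; apply: INR_leq.
have hFG : INR (N ^_ m) <= INR N ^ m by rewrite -INR_exp; apply/INR_leq/ffact_leq_expn.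
have he : 0 <= INR m * (INR m - 1).
  case: m {IH mN hm hF hG hmN hFG} => [|m]; first by rewrite /=; lra.
  by rewrite S_INR; have := pos_INR m; nra.
have h1 : INR N ^ m * (INR N - INR m * (INR m - 1)) * (INR N - INR m)
    <= INR (N ^_ m) * INR N * (INR N - INR m) by apply: Rmult_le_compat_r; lra.
have h2 : INR N * (INR N - INR m * (INR m - 1) - 2 * INR m) <=
    (INR N - INR m * (INR m - 1)) * (INR N - INR m) by nra.
have := Rmult_le_compat_l _ _ _ hG h2.
nra.
Qed.

Lemma ffact_shift_lower m N1 N2 : (m <= N1)%N -> (N1 <= N2)%N ->
  INR (N2 ^_ m) * (INR N1 - INR m + 1 - INR m * (INR N2 - INR N1))
    <= INR (N1 ^_ m) * (INR N1 - INR m + 1).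
Proof.
elim: m N1 N2 => [|m IH] N1 N2 mN1 N12; first by rewrite !ffactn0 /=; lra.
case: N1 mN1 N12 => [//|n1] mN1 N12; case: N2 N12 => [//|n2] N12.
have {}IH := IH n1 n2 mN1 N12.
rewrite !ffactSS !INR_mul !S_INR.
have hG := pos_INR (n2 ^_ m); have hm := pos_INR m.
have hmn : INR m <= INR n1 by apply: INR_leq.
set d := INR n2 - INR n1.
have h12 : INR n1 <= INR n2 by apply: INR_leq.
have hd : 0 <= d by rewrite /d; lra.
have key : (INR n2 + 1) * (INR n1 + 1 - (INR m + 1) + 1 - (INR m + 1) * d) <=
           (INR n1 + 1) * (INR n1 - INR m + 1 - INR m * d).
  have -> : INR n2 = INR n1 + d by rewrite /d; ring.
  by have := Rmult_le_pos _ _ hd hm; have := Rmult_le_pos _ _ hd hd; nra.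
have := Rmult_le_compat_l _ _ _ hG key.
have := Rmult_le_compat_l (INR n1 + 1) _ _ ltac:(lra) IH.
rewrite /d; nra.
Qed.

Lemma sum_geometric_le (f : nat -> nat) m n r : (m <= n)%N -> 0 <= r < 1 ->
  (forall u, (m <= u < n)%N -> INR (f u.+1) <= r * INR (f u)) ->
  INR (\sum_(m <= u < n.+1) f u) <= INR (f m) / (1 - r).
Proof.
move=> mn hr hf; rewrite -Rle_div_r; last lra.
(* the invariant survives each step since f (n+1) <= r f n *)
suff : (1 - r) * INR (\sum_(m <= u < n.+1) f u) + r * INR (f n) <= INR (f m).
  by have := pos_INR (f n); nra.
elim: n mn hf => [|n IH] mn hf.
  by move: mn; rewrite leqn0 => /eqP->; rewrite big_nat1; lra.
case: (ltngtP m n.+1) mn => // [mn | ->] _; last by rewrite big_nat1; lra.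
have -> : INR (\sum_(m <= u < n.+2) f u) = INR (\sum_(m <= u < n.+1) f u) + INR (f n.+1).
  by rewrite -INR_add big_nat_recr // ltnW.
have := IH mn (fun u hu => hf u ltac:(lia)); have := hf n ltac:(lia); lra.
Qed.

Lemma sum_le_const (f : nat -> nat) n b :
  (forall u, (u < n)%N -> INR (f u) <= b) ->
  INR (\sum_(0 <= u < n) f u) <= INR n * b.
Proof.
elim: n => [|n IH] hf; first by rewrite big_geq //=; lra.
rewrite S_INR big_nat_recr //= INR_add.
have := IH (fun u hu => hf u (ltnW hu)); have := hf n (ltnSn n); lra.
Qed.

Lemma chain_le_pow (f : nat -> nat) s M : 0 <= M ->
  (forall u, (u < s)%N -> INR (f u) <= M * INR (f u.+1)) ->
  forall u, (u <= s)%N -> INR (f u) <= M ^ (s - u) * INR (f s).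
Proof.
move=> hM hf.
suff chain k u : (u + k)%N = s -> INR (f u) <= M ^ k * INR (f s).
  by move=> u us; apply: chain; rewrite subnKC.
elim: k u => [|k IH] u e; first by rewrite -e addn0 /=; lra.
apply: Rle_trans (hf u ltac:(lia)) _; rewrite [M ^ _]/= Rmult_assoc.
by apply: Rmult_le_compat_l => //; apply: IH; rewrite addSnnS.
Qed.

Lemma edge_probE s K P : (K <= P)%N ->
  edge_prob s K P = INR (\sum_(s <= u < K.+1) meet_card P K u) / INR 'C(P, K).
Proof.
move=> KP; have hC : 0 < INR 'C(P, K) by apply: INR_gt0; rewrite bin_gt0.
by rewrite /edge_prob overlap_pairsE // INR_mul; field; lra.
Qed.

Lemma approx_probE s K P :
  approx_prob s K P = (INR K ^ 2 / INR P) ^ s / INR s`!.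
Proof. by rewrite /approx_prob pow_mult /Rdiv Rpow_mult_distr pow_inv; ring. Qed.

Lemma approx_prob_gt0 s K P : (1 <= K)%N -> (K <= P)%N -> 0 < approx_prob s K P.
Proof.
move=> K1 KP; have hK := INR_gt0 K1; have hP := INR_gt0 (leq_trans K1 KP).
apply: Rmult_lt_0_compat; first by apply/Rinv_0_lt_compat/INR_gt0/fact_gt0.
by apply: Rdiv_lt_0_compat; apply: pow_lt.
Qed.

Lemma first_term_le s K P : (s <= K)%N -> (K <= P)%N -> INR s * INR s < INR P ->
  INR (meet_card P K s) / INR 'C(P, K) <=
    approx_prob s K P * (INR P / (INR P - INR s * (INR s - 1))).
Proof.
move=> sK KP ss; have := INR_leq (meet_card_first_le sK KP).
rewrite INR_mul (INR_mul (meet_card P K s)) INR_mul INR_exp => hc.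
have hY := ffact_pow_lower (leq_trans sK KP).
have hC : 0 < INR 'C(P, K) by apply: INR_gt0; rewrite bin_gt0.
have hf : 0 < INR s`! by apply/INR_gt0/fact_gt0.
have hp : 0 < INR P by have := pos_INR s; nra.
have hps : 0 < INR P ^ s by apply: pow_lt.
have hpe : 0 < INR P - INR s * (INR s - 1) by have := pos_INR s; nra.
have hA := pow_le (INR K) (2 * s) (pos_INR K).
have hY0 : 0 < INR (P ^_ s) by apply: INR_gt0; rewrite ffact_gt0 (leq_trans sK KP).
set c := INR (meet_card P K s) in hc *; set Y := INR (P ^_ s) in hc hY hY0.
set A := INR K ^ (2 * s) in hc hA *; set e := INR s * (INR s - 1) in hY hpe *.
have cA : c / INR 'C(P, K) <= A / (INR s`! * Y).
  apply: (Rmult_le_reg_r (INR 'C(P, K) * (INR s`! * Y))).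
    by repeat apply: Rmult_lt_0_compat.
  have -> : c / INR 'C(P, K) * (INR 'C(P, K) * (INR s`! * Y)) = c * INR s`! * Y.
    by field; lra.
  have -> : A / (INR s`! * Y) * (INR 'C(P, K) * (INR s`! * Y)) = INR 'C(P, K) * A.
    by field; split; lra.
  exact: hc.
apply: Rle_trans cA _; rewrite /approx_prob -/A.
have -> : / INR s`! * (A / INR P ^ s) * (INR P / (INR P - e)) =
  A / (INR s`! * (INR P ^ s * (INR P - e) / INR P)) by field; lra.
apply: Rmult_le_compat_l => //; apply: Rinv_le_contravar.
  by apply: Rmult_lt_0_compat => //; apply: Rdiv_lt_0_compat => //; nra.
by apply: Rmult_le_compat_l; [lra | rewrite Rle_div_l //; lra].
Qed.

Lemma upper_bound_arith (r x sg : R) : 0 <= sg <= 1/16 -> 0 <= x <= 1/16 ->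
  0 <= r <= 8/7 * x -> 1 <= (1 - sg) * (1 - r) * (1 + 4 * x + 2 * sg).
Proof.
move=> hs hx hr.
have : 1 <= (1 - sg) * (1 - 8/7 * x) * (1 + 4 * x + 2 * sg) by nra.
have : (1 - sg) * (1 - 8/7 * x) * (1 + 4 * x + 2 * sg) <=
       (1 - sg) * (1 - r) * (1 + 4 * x + 2 * sg).
  by apply: Rmult_le_compat_r; [lra | apply: Rmult_le_compat_l; lra].
lra.
Qed.

Lemma tail_ratio_bounds K P : (0 < K)%N -> 16 * INR K ^ 2 <= INR P ->
  0 <= INR K ^ 2 / (INR P - 2 * INR K) <= 8/7 * (INR K ^ 2 / INR P).
Proof.
move=> /INR_ge1 hk1 hKP; have hp : 0 < INR P by nra.
split; first by apply: Rdiv_le_0_compat; nra.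
rewrite Rle_div_l; last by nra.
have -> : 8/7 * (INR K ^ 2 / INR P) * (INR P - 2 * INR K) =
  INR K ^ 2 * (8/7 * (INR P - 2 * INR K) / INR P) by field; lra.
rewrite -[X in X <= _]Rmult_1_r; apply: Rmult_le_compat_l; first nra.
by apply/(Rle_div_r _ _ _ hp); nra.
Qed.

Lemma meet_card_tail_le s K P : (0 < K)%N -> (s <= K)%N -> 16 * INR K ^ 2 <= INR P ->
  INR (\sum_(s <= u < K.+1) meet_card P K u) <=
    INR (meet_card P K s) / (1 - INR K ^ 2 / (INR P - 2 * INR K)).
Proof.
move=> K0 sK hKP; have hk1 := INR_ge1 K0; have hp : 0 < INR P by nra.
have hr := tail_ratio_bounds K0 hKP.
have hx : INR K ^ 2 / INR P <= 1/16 by rewrite (Rle_div_l _ _ _ hp); lra.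
have h2K : INR (P - K.*2) = INR P - 2 * INR K.
  rewrite INR_sub -muln2 ?INR_mul /=; first lra.
  by apply: leq_of_INR; rewrite INR_mul /=; nra.
apply: sum_geometric_le => [//||u /andP[_ uK]]; first lra.
have := INR_leq (meet_card_succ_le P uK); rewrite !INR_mul h2K.
set cu := INR 'C(K, u) * _; set cu1 := INR 'C(K, u.+1) * _ => step.
apply: (Rmult_le_reg_r (INR P - 2 * INR K)); first nra.
by have -> : INR K ^ 2 / (INR P - 2 * INR K) * cu * (INR P - 2 * INR K) =
  cu * (INR K * INR K); [field; nra | lra].
Qed.

Lemma edge_prob_le s K P : (1 <= s)%N -> (s <= K)%N -> (K <= P)%N ->
  16 * INR K ^ 2 <= INR P -> 16 * INR s ^ 2 <= INR P ->
  edge_prob s K P <=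
    approx_prob s K P * (1 + 4 * (INR K ^ 2 / INR P) + 2 * (INR s ^ 2 / INR P)).
Proof.
move=> s1 sK KP hKP hsP; have K0 : (0 < K)%N by lia.
have hk1 := INR_ge1 K0; have hs1 := INR_ge1 s1; have hp : 0 < INR P by nra.
have hC : 0 < INR 'C(P, K) by apply: INR_gt0; rewrite bin_gt0.
have ha := approx_prob_gt0 s K0 KP.
have hsum := meet_card_tail_le K0 sK hKP; have hr := tail_ratio_bounds K0 hKP.
have hfirst := first_term_le sK KP ltac:(nra).
set r := INR K ^ 2 / _ in hsum hr; set e := INR s * (INR s - 1) in hfirst.
set a := approx_prob s K P in ha hfirst *.
set sg := INR s ^ 2 / INR P; set x := INR K ^ 2 / INR P in hr *.
have hx : 0 <= x <= 1/16.
  by rewrite /x (Rle_div_l _ _ _ hp); split; [apply: Rdiv_le_0_compat|]; nra.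
have hsg : 0 <= sg <= 1/16.
  by rewrite /sg (Rle_div_l _ _ _ hp); split; [apply: Rdiv_le_0_compat|]; nra.
have hpe : (1 - sg) * INR P <= INR P - e by rewrite /sg /e; field_simplify; nra.
have key := upper_bound_arith hsg hx hr.
have hr1 : 0 < 1 - r by lra.
rewrite edge_probE //.
apply: Rle_trans (_ : INR (meet_card P K s) / INR 'C(P, K) / (1 - r) <= _).
  have -> : INR (meet_card P K s) / INR 'C(P, K) / (1 - r) =
    INR (meet_card P K s) / (1 - r) / INR 'C(P, K) by field; lra.
  by apply: Rmult_le_compat_r => //; apply/Rlt_le/Rinv_0_lt_compat.
apply: Rle_trans (_ : a * (INR P / (INR P - e)) / (1 - r) <= _).
  by apply: Rmult_le_compat_r => //; apply/Rlt_le/Rinv_0_lt_compat.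
rewrite Rle_div_l // Rmult_assoc; apply: Rmult_le_compat_l; first lra.
rewrite Rle_div_l; last nra.
have hPhi : 0 <= (1 + 4 * x + 2 * sg) * (1 - r) by apply: Rmult_le_pos; lra.
have := Rmult_le_compat_l _ _ _ hPhi hpe.
nra.
Qed.

Lemma ffact_ratio_ge N m : (m <= N)%N -> (0 < N)%N ->
  1 - INR m * (INR m - 1) / INR N <= INR (N ^_ m) / INR N ^ m.
Proof.
move=> mN N0; have hN := INR_gt0 N0; have hNm : 0 < INR N ^ m by apply: pow_lt.
have h := ffact_pow_lower mN.
rewrite -Rle_div_r //; apply: (Rmult_le_reg_r (INR N)) => //.
by have -> : (1 - INR m * (INR m - 1) / INR N) * INR N ^ m * INR N =
  INR N ^ m * (INR N - INR m * (INR m - 1)) by field; lra.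
Qed.

Lemma ffact_shift_ratio_ge s K P : (1 <= s)%N -> (s <= K)%N -> (K <= P)%N ->
  16 * INR K ^ 2 <= INR P ->
  1 - 8/7 * (INR K ^ 2 / INR P) <= INR ((P - K) ^_ (K - s)) / INR ((P - s) ^_ (K - s)).
Proof.
move=> s1 sK KP hKP.
have hk1 : 1 <= INR K by apply: INR_ge1; lia.
have hs : INR s <= INR K by apply: INR_leq.
have hp : 0 < INR P by nra.
have h2K : (K.*2 <= P)%N by apply: leq_of_INR; rewrite -muln2 INR_mul /=; nra.
have := @ffact_shift_lower (K - s) (P - K) (P - s) ltac:(lia) ltac:(lia).
rewrite !INR_sub //; last by lia.
have hV : 0 < INR ((P - s) ^_ (K - s)) by apply: INR_gt0; rewrite ffact_gt0; lia.
set U := INR ((P - K) ^_ _); set V := INR ((P - s) ^_ _) in hV *.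
set L := INR P - INR K - (INR K - INR s) + 1 => h.
have hKK : INR K <= INR K ^ 2 by nra.
have hL : 7/8 * INR P <= L by rewrite /L; have := pos_INR s; lra.
have hd : (INR K - INR s) * (INR P - INR s - (INR P - INR K)) <=
    8/7 * (INR K ^ 2 / INR P) * L.
  have -> : 8/7 * (INR K ^ 2 / INR P) * L = INR K ^ 2 * (8/7 * L / INR P) by field; lra.
  have -> : INR P - INR s - (INR P - INR K) = INR K - INR s by ring.
  have t1 : 1 <= 8/7 * L / INR P by rewrite -Rle_div_r //; lra.
  have : (INR K - INR s) * (INR K - INR s) <= INR K ^ 2 by have := pos_INR s; nra.
  have := Rmult_le_compat_l _ _ _ (pow2_ge_0 (INR K)) t1.
  lra.
rewrite -Rle_div_r //; apply: (Rmult_le_reg_r L); first lra.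
have := Rmult_le_compat_l _ _ _ (Rlt_le _ _ hV) hd.
nra.
Qed.

Lemma lower_bound_arith Z W e1 e3 : 0 <= Z <= 1 -> 1 - e1 <= Z -> 0 <= W <= 1 ->
  1 - e3 <= W -> 0 <= e1 -> 1 - 2 * e1 - e3 <= Z ^ 2 * W.
Proof.
move=> hZ hZ1 hW hW1 he1.
have hZ2 : 1 - 2 * e1 <= Z ^ 2 by nra.
nra.
Qed.

Lemma first_termE s K P : (s <= K)%N -> (K <= P)%N ->
  INR (meet_card P K s) / INR 'C(P, K) =
    INR (K ^_ s) ^ 2 * INR ((P - K) ^_ (K - s)) /
      (INR s`! * INR (P ^_ s) * INR ((P - s) ^_ (K - s))).
Proof.
move=> sK KP; have := f_equal INR (meet_card_ffact sK KP).
rewrite 2!INR_mul (INR_mul (meet_card P K s)) 2!INR_mul INR_exp => e.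
have hC : 0 < INR 'C(P, K) by apply: INR_gt0; rewrite bin_gt0.
have hf : 0 < INR s`! by apply/INR_gt0/fact_gt0.
have hY : 0 < INR (P ^_ s) by apply: INR_gt0; rewrite ffact_gt0; lia.
have hV : 0 < INR ((P - s) ^_ (K - s)) by apply: INR_gt0; rewrite ffact_gt0; lia.
apply: (Rmult_eq_reg_r (INR 'C(P, K) * (INR s`! * INR (P ^_ s) * INR ((P - s) ^_ (K - s))))).
  have -> : INR (meet_card P K s) / INR 'C(P, K) *
    (INR 'C(P, K) * (INR s`! * INR (P ^_ s) * INR ((P - s) ^_ (K - s)))) =
    INR (meet_card P K s) * INR s`! * INR (P ^_ s) * INR ((P - s) ^_ (K - s)).
    by field; lra.
  by rewrite e; field; repeat split; lra.
by apply: Rgt_not_eq; repeat apply: Rmult_lt_0_compat.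
Qed.

Lemma first_term_ge s K P : (1 <= s)%N -> (s <= K)%N -> (K <= P)%N ->
  16 * INR K ^ 2 <= INR P ->
  approx_prob s K P * (1 - 2 * (INR s * (INR s - 1) / INR K) - 2 * (INR K ^ 2 / INR P))
    <= INR (meet_card P K s) / INR 'C(P, K).
Proof.
move=> s1 sK KP hKP; have K0 : (0 < K)%N by lia.
have hk := INR_gt0 K0; have hs1 := INR_ge1 s1.
have hp : 0 < INR P by nra.
have hf : 0 < INR s`! by apply/INR_gt0/fact_gt0.
have hks : 0 < INR K ^ s by apply: pow_lt.
have hps : 0 < INR P ^ s by apply: pow_lt.
have hY : 0 < INR (P ^_ s) by apply: INR_gt0; rewrite ffact_gt0; lia.
have hV : 0 < INR ((P - s) ^_ (K - s)) by apply: INR_gt0; rewrite ffact_gt0; lia.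
have hYp : INR (P ^_ s) <= INR P ^ s by rewrite -INR_exp; apply/INR_leq/ffact_leq_expn.
have hZ1 : 0 <= INR (K ^_ s) / INR K ^ s <= 1.
  split; first by apply: Rdiv_le_0_compat => //; apply: pos_INR.
  by rewrite (Rle_div_l _ _ _ hks) Rmult_1_l -INR_exp; apply/INR_leq/ffact_leq_expn.
have hW1 : 0 <= INR ((P - K) ^_ (K - s)) / INR ((P - s) ^_ (K - s)) <= 1.
  split; first by apply: Rdiv_le_0_compat => //; apply: pos_INR.
  by rewrite (Rle_div_l _ _ _ hV) Rmult_1_l; apply/INR_leq/leq_ffactl; lia.
have he : 0 <= INR s * (INR s - 1) / INR K by apply: Rdiv_le_0_compat => //; nra.
have key := lower_bound_arith hZ1 (ffact_ratio_ge sK K0) hW1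
  (ffact_shift_ratio_ge s1 sK KP hKP) he.
have hx : 0 <= INR K ^ 2 / INR P by apply: Rdiv_le_0_compat; nra.
have ha := approx_prob_gt0 s K0 KP.
rewrite first_termE //.
set X := INR (K ^_ s) in hZ1 key *; set U := INR ((P - K) ^_ _) in hW1 key *.
set V := INR ((P - s) ^_ _) in hV hW1 key *; set Y := INR (P ^_ s) in hY hYp *.
apply: Rle_trans (_ : approx_prob s K P * ((X / INR K ^ s) ^ 2 * (U / V)) <= _).
  by apply: Rmult_le_compat_l; lra.
have -> : approx_prob s K P * ((X / INR K ^ s) ^ 2 * (U / V)) =
    X ^ 2 * U / (INR s`! * INR P ^ s * V).
  by rewrite /approx_prob mulnC pow_mult; field; repeat split; lra.
apply: Rmult_le_compat_l; first by apply: Rmult_le_pos; [apply: pow2_ge_0 | apply: pos_INR].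
apply: Rinv_le_contravar; first by repeat apply: Rmult_lt_0_compat.
by apply: Rmult_le_compat_r; [lra | apply: Rmult_le_compat_l; lra].
Qed.

Lemma edge_prob_ge s K P : (1 <= s)%N -> (s <= K)%N -> (K <= P)%N ->
  16 * INR K ^ 2 <= INR P ->
  approx_prob s K P * (1 - 2 * (INR s * (INR s - 1) / INR K) - 2 * (INR K ^ 2 / INR P))
    <= edge_prob s K P.
Proof.
move=> s1 sK KP hKP; apply: Rle_trans (first_term_ge s1 sK KP hKP) _.
have hC : 0 < INR 'C(P, K) by apply: INR_gt0; rewrite bin_gt0.
rewrite edge_probE // big_ltn ?ltnS // INR_add.
apply: Rmult_le_compat_r; first by apply/Rlt_le/Rinv_0_lt_compat.
by have := pos_INR (\sum_(s.+1 <= u < K.+1) meet_card P K u); lra.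
Qed.

Lemma meet_card_le_succ_dense s K P d u : (1 <= s)%N -> (2 * s <= K)%N ->
  0 < d -> d * INR P <= INR K ^ 2 -> (u < s)%N ->
  INR (meet_card P K u) <= 4 * INR s / d * INR (meet_card P K u.+1).
Proof.
move=> s1 h2s hd hdP us; have sK : (s <= K)%N by lia.
have hs1 := INR_ge1 s1; have hKs1 : 1 <= INR (K - s) by apply: INR_ge1; lia.
have hKs : INR K ^ 2 <= 4 * INR (K - s) ^ 2.
  have : 2 * INR s <= INR K by have := INR_leq h2s; rewrite INR_mul /=; lra.
  by rewrite INR_sub //; nra.
have hsP : INR s * INR P <= 4 * INR s / d * INR (K - s) ^ 2.
  apply: (Rmult_le_reg_r d) => //.
  have -> : 4 * INR s / d * INR (K - s) ^ 2 * d = INR s * (4 * INR (K - s) ^ 2).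
    by field; lra.
  by rewrite Rmult_assoc; apply: Rmult_le_compat_l; lra.
have := INR_leq (meet_card_pred_le P us sK); rewrite !INR_mul.
set cu := INR 'C(K, u) * _; set cu1 := INR 'C(K, u.+1) * _ => h.
have hcu1 : 0 <= cu1 by apply: Rmult_le_pos; apply: pos_INR.
apply: (Rmult_le_reg_r (INR (K - s) * INR (K - s))); first by nra.
apply: Rle_trans h _.
by have := Rmult_le_compat_l _ _ _ hcu1 hsP; lra.
Qed.

Lemma edge_prob_ge_dense s K P d : (1 <= s)%N -> (2 * s <= K)%N -> (K <= P)%N ->
  0 < d <= 1 -> d * INR P <= INR K ^ 2 ->
  / (INR s * (4 * INR s / d) ^ s + 1) <= edge_prob s K P.
Proof.
move=> s1 h2s KP [hd hd1] hdP; have sK : (s <= K)%N by lia.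
have hs1 := INR_ge1 s1; set M := 4 * INR s / d.
have hM1 : 1 <= M by rewrite /M -Rle_div_r; lra.
have hsmall u : (u < s)%N -> INR (meet_card P K u) <= M ^ s * INR (meet_card P K s).
  move=> us; have := meet_card_le_succ_dense s1 h2s hd hdP; rewrite -/M => step.
  apply: Rle_trans (chain_le_pow _ step (ltnW us)) _; first lra.
  by apply: Rmult_le_compat_r; [apply: pos_INR | apply: Rle_pow; [lra | lia]].
have hlow := sum_le_const hsmall.
have := f_equal INR (sum_meet_card KP).
rewrite (big_cat_nat _ (n := s)) //= ?INR_add; last by lia.
rewrite edge_probE //.
set S := INR (\sum_(s <= u < K.+1) _); set C := INR 'C(P, K) => hC.
have hS : INR (meet_card P K s) <= S.
  rewrite /S big_ltn ?ltnS // INR_add.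
  by have := pos_INR (\sum_(s.+1 <= u < K.+1) meet_card P K u); lra.
have hC0 : 0 < C by apply: INR_gt0; rewrite bin_gt0.
have hMs : 0 <= INR s * M ^ s by apply: Rmult_le_pos; [lra | apply: pow_le; lra].
have := Rmult_le_compat_l _ _ _ hMs hS; rewrite -Rmult_assoc in hlow => hsS.
rewrite -Rle_div_r; last lra.
apply: (Rmult_le_reg_l (INR s * M ^ s + 1)); first lra.
by rewrite -Rmult_assoc Rinv_r; lra.
Qed.

Definition rel_err s K P : R :=
  4 * (INR K ^ 2 / INR P) + 2 * (INR s ^ 2 / INR P) + 2 * (INR s * (INR s - 1) / INR K).

Lemma rel_err_ge0 s K P : (1 <= s)%N -> (1 <= K)%N -> (K <= P)%N -> 0 <= rel_err s K P.
Proof.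
move=> s1 K1 KP; have hk := INR_gt0 K1; have hp := INR_gt0 (leq_trans K1 KP).
have : 1 <= INR s by apply: INR_ge1.
move=> hs; rewrite /rel_err.
have := Rdiv_le_0_compat _ _ (pow2_ge_0 (INR K)) hp.
have := Rdiv_le_0_compat _ _ (pow2_ge_0 (INR s)) hp.
have := Rdiv_le_0_compat (INR s * (INR s - 1)) _ ltac:(nra) hk.
lra.
Qed.

Lemma edge_prob_dist_le s K P : (1 <= s)%N -> (s <= K)%N -> (K <= P)%N ->
  rel_err s K P <= 1/8 ->
  Rabs (edge_prob s K P - approx_prob s K P) <= approx_prob s K P * rel_err s K P.
Proof.
move=> s1 sK KP he; have K1 : (1 <= K)%N by lia.
have hk := INR_gt0 K1; have hp := INR_gt0 (leq_trans K1 KP).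
have hx := Rdiv_le_0_compat _ _ (pow2_ge_0 (INR K)) hp.
have hsg := Rdiv_le_0_compat _ _ (pow2_ge_0 (INR s)) hp.
have hs : 1 <= INR s by apply: INR_ge1.
have he1 := Rdiv_le_0_compat (INR s * (INR s - 1)) _ ltac:(nra) hk.
have hKP : 16 * INR K ^ 2 <= INR P.
  have : INR K ^ 2 / INR P <= 1/16 by rewrite /rel_err in he; lra.
  by rewrite (Rle_div_l _ _ _ hp); lra.
have hsP : 16 * INR s ^ 2 <= INR P.
  have : INR s ^ 2 / INR P <= 1/16 by rewrite /rel_err in he; lra.
  by rewrite (Rle_div_l _ _ _ hp); lra.
have hup := edge_prob_le s1 sK KP hKP hsP; have hlo := edge_prob_ge s1 sK KP hKP.
have ha := approx_prob_gt0 s K1 KP.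
by apply: Rabs_le; rewrite /rel_err; split; nra.
Qed.

Local Arguments filter_and {T F Filter P Q}.
Local Arguments filter_imp {T F Filter P Q}.

Lemma eventually_INR_gt A : eventually (fun n => A < INR n).
Proof.
have [N hN] := INR_unbounded A.
by exists N => n /le_INR; apply: Rlt_le_trans.
Qed.

Lemma eventually_geq N : eventually (fun n => (N <= n)%N).
Proof. by exists N => n /leP. Qed.

Lemma eventually_ln_gt A : eventually (fun n => A < ln (INR n)).
Proof.
apply: (filter_imp _ (eventually_INR_gt (exp A))) => n h.
by rewrite -[X in X < _]ln_exp; apply: ln_increasing => //; apply: exp_pos.
Qed.

Lemma pow_exp t m : exp t ^ m = exp (INR m * t).
Proof.
elim: m => [|m IH]; first by rewrite /= Rmult_0_l exp_0.
by rewrite S_INR [exp t ^ m.+1]/= IH Rmult_plus_distr_r Rmult_1_l exp_plus Rmult_comm.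
Qed.

Lemma ln_ge0 y : 1 <= y -> 0 <= ln y.
Proof. by move=> h; rewrite -ln_1; apply: ln_le; lra. Qed.

Lemma ln_pow_le m y : 1 <= y -> ln y ^ m.+1 <= INR m.+1 ^ m.+1 * y.
Proof.
move=> hy; have hl := ln_ge0 hy.
have hm : 0 < INR m.+1 by apply: lt_0_INR; lia.
set t := ln y / INR m.+1.
have ht : 0 <= t by apply: Rdiv_le_0_compat.
have e1 : ln y = INR m.+1 * t by rewrite /t; field; lra.
have e2 : exp t ^ m.+1 = y by rewrite pow_exp -e1 exp_ln //; lra.
(* [t <= exp t] raised to the power [m + 1] *)
rewrite e1 Rpow_mult_distr -e2; apply: Rmult_le_compat_l; first by apply: pow_le; lra.
by apply: pow_incr; split => //; have := exp_ineq1_le t; lra.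
Qed.

Lemma eventually_ln_pow_div_lt m eps : 0 < eps ->
  eventually (fun n => ln (INR n) ^ m / INR n < eps).
Proof.
move=> he; set M := INR m.+1 ^ m.+1.
have hM : 0 < M by apply: pow_lt; apply: lt_0_INR; lia.
apply: (filter_imp _ (filter_and (eventually_ln_gt (M / eps))
  (filter_and (eventually_ln_gt 0) (eventually_INR_gt 1)))) => n [hMl [hl hn]].
have hb := ln_pow_le m (Rlt_le _ _ hn).
set l := ln (INR n) in hMl hl hb *.
have hMe : M < eps * l by move: hMl; rewrite Rlt_div_l //; lra.
have -> : l ^ m / INR n = l ^ m.+1 / (INR n * l) by rewrite [l ^ m.+1]/=; field; lra.
rewrite -/M in hb; rewrite Rlt_div_l; nra.
Qed.

Lemma ln_le_mul eps y : 0 < eps -> 1 <= y -> 4 / eps ^ 2 <= y -> ln y <= eps * y.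
Proof.
move=> he hy hy4; have hb := ln_pow_le 1 hy.
have e4 : INR 2 ^ 2 = 4 by rewrite /=; lra.
rewrite e4 in hb.
have hl := ln_ge0 hy.
have h4 : 4 <= eps ^ 2 * y by move: hy4; rewrite Rle_div_l; nra.
case: (Rle_lt_dec (ln y) (eps * y)) => // h.
have h0 : 0 <= eps * y by nra.
have : (eps * y) ^ 2 < ln y ^ 2 by nra.
have := Rmult_le_compat_r y _ _ (Rle_trans _ _ _ Rle_0_1 hy) h4.
nra.
Qed.

Lemma eventually_lnln_le eps : 0 < eps ->
  eventually (fun n => ln (ln (INR n)) <= eps * ln (INR n)).
Proof.
move=> he; apply: (filter_imp _ (filter_and (eventually_ln_gt 1)
  (eventually_ln_gt (4 / eps ^ 2)))) => n [h1 h2].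
by apply: ln_le_mul => //; lra.
Qed.

Lemma eventually_lt_of_pow (y : nat -> R) m : (1 <= m)%N ->
  eventually (fun n => 0 <= y n) ->
  (forall eps, 0 < eps -> eventually (fun n => y n ^ m < eps)) ->
  forall eps, 0 < eps -> eventually (fun n => y n < eps).
Proof.
move=> hm hy ypow eps he.
apply: (filter_imp _ (filter_and hy (ypow (eps ^ m) (pow_lt _ _ he)))) => n [h0 h].
case: (Rlt_le_dec (y n) eps) => // h'.
by have := pow_incr _ _ m (conj (Rlt_le _ _ he) h'); lra.
Qed.

Lemma lnln_perturbation_bounds (v : nat -> R) :
  (exists gamma : nat -> R, bigO_lnln gamma /\
      forall n : nat, (1 <= n)%coq_nat -> v n = (ln (INR n) + gamma n) / INR n) ->
  eventually (fun n => 1/4 <= INR n * v n /\ INR n * v n <= 2 * ln (INR n)).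
Proof.
move=> [g [[C [N0 gC]] vE]].
set C' := Rabs C + 1; have hC' : 0 < C' by rewrite /C'; have := Rabs_pos C; lra.
have hC'' : 0 < / (2 * C') by apply: Rinv_0_lt_compat; lra.
apply: (filter_imp _ (filter_and (eventually_geq (maxn N0 1))
  (filter_and (eventually_ln_gt 1) (eventually_lnln_le hC'')))) => n [hn1 [hl hll]].
have hN0 : (N0 <= n)%N by apply: leq_trans hn1; apply: leq_maxl.
have hn : 0 < INR n by apply: lt_0_INR; lia.
have -> : INR n * v n = ln (INR n) + g n by rewrite vE; [field; lra | apply/leP; lia].
have hll0 : 0 <= ln (ln (INR n)) by apply: ln_ge0; lra.
have hg : Rabs (g n) <= ln (INR n) / 2.
  apply: Rle_trans (gC n hN0) _.
  have : C * ln (ln (INR n)) <= C' * ln (ln (INR n)).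
    by apply: Rmult_le_compat_r => //; rewrite /C'; have := Rle_abs C; lra.
  have : C' * ln (ln (INR n)) <= C' * (/ (2 * C') * ln (INR n)).
    by apply: Rmult_le_compat_l; lra.
  have -> : C' * (/ (2 * C') * ln (INR n)) = ln (INR n) / 2 by field; lra.
  lra.
by move: hg => /Rabs_le_between; lra.
Qed.

Section Asymptotics.
Variables (s : nat) (K P : nat -> nat) (c : R).
Hypothesis s_gt0 : (1 <= s)%N.
Hypothesis sKP : forall n, (s <= K n)%N /\ (K n <= P n)%N.
Hypothesis c_gt0 : 0 < c.
Hypothesis P_ge : eventually (fun n => c * INR n <= INR (P n)).

Local Notation a n := (approx_prob s (K n) (P n)).
Local Notation q n := (edge_prob s (K n) (P n)).

Lemma K_ge1 n : 1 <= INR (K n).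
Proof. by apply: INR_ge1; have := sKP n; lia. Qed.

Lemma K_le_P n : INR (K n) <= INR (P n).
Proof. by apply: INR_leq; have := sKP n; lia. Qed.

Lemma a_gt0 n : 0 < a n.
Proof. by have [sK KP] := sKP n; apply: approx_prob_gt0 KP; lia. Qed.

Lemma eventually_K_pow_ge b : (2 <= s)%N -> 0 < b ->
  eventually (fun n => b <= INR n * a n) ->
  eventually (fun n => b * c ^ s * INR n <= INR (K n) ^ (2 * s)).
Proof.
move=> s2 hb ha; apply: (filter_imp _ (filter_and (filter_and P_ge ha)
  (eventually_INR_gt 1))) => n [[hP hbn] hn].
have hf : 1 <= INR s`! by apply: INR_ge1; apply: fact_gt0.
have hp : 0 < INR (P n) by nra.
have hps : 0 < INR (P n) ^ s by apply: pow_lt.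
have hK : INR (K n) ^ (2 * s) = INR s`! * a n * INR (P n) ^ s.
  by rewrite /approx_prob; field; split; lra.
have hcs : (c * INR n) ^ s <= INR (P n) ^ s by apply: pow_incr; nra.
have hns : INR n * INR n <= INR n ^ s.
  by have := Rle_pow (INR n) 2 s ltac:(lra) ltac:(apply/leP; lia); rewrite /=; lra.
have ha0 := a_gt0 n.
have hcs0 : 0 < c ^ s by apply: pow_lt.
rewrite hK; rewrite Rpow_mult_distr in hcs.
apply: Rle_trans (_ : a n * (c ^ s * (INR n * INR n)) <= _).
  by have := Rmult_le_compat_r (c ^ s * INR n) _ _ ltac:(nra) hbn; lra.
apply: Rle_trans (_ : a n * INR (P n) ^ s <= _).
  apply: Rmult_le_compat_l; first lra.
  by apply: Rle_trans hcs; apply: Rmult_le_compat_l; lra.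
by have := Rmult_le_compat_r (a n * INR (P n) ^ s) _ _ ltac:(nra) hf; lra.
Qed.

Lemma eventually_ln_div_K_lt b : (2 <= s)%N -> 0 < b ->
  eventually (fun n => b <= INR n * a n) ->
  forall eps, 0 < eps -> eventually (fun n => ln (INR n) / INR (K n) < eps).
Proof.
move=> s2 hb ha; have hK := eventually_K_pow_ge s2 hb ha.
have hbc : 0 < b * c ^ s by apply: Rmult_lt_0_compat => //; apply: pow_lt.
apply: (@eventually_lt_of_pow _ (2 * s)); first lia.
  apply: (filter_imp _ (eventually_ln_gt 0)) => n h.
  by apply: Rdiv_le_0_compat; [lra | have := K_ge1 n; lra].
move=> eps he; apply: (filter_imp _ (filter_and hK (filter_and (eventually_INR_gt 1)
  (eventually_ln_pow_div_lt (2 * s) (Rmult_lt_0_compat _ _ he hbc))))) => n [hKn [hn hl]].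
have hk := K_ge1 n.
rewrite /Rdiv Rpow_mult_distr pow_inv -/(Rdiv _ _).
have hl0 : 0 <= ln (INR n) ^ (2 * s) by rewrite pow_mult; apply: pow_le; apply: pow2_ge_0.
apply: (@Rle_lt_trans _ (ln (INR n) ^ (2 * s) / (b * c ^ s * INR n))).
  apply: Rmult_le_compat_l => //; apply: Rinv_le_contravar => //.
  by apply: Rmult_lt_0_compat; lra.
rewrite Rlt_div_l; last by apply: Rmult_lt_0_compat; lra.
by move: hl; rewrite Rlt_div_l; lra.
Qed.

Lemma eventually_x_ln_lt L : 0 < L ->
  eventually (fun n => INR n * a n <= L * ln (INR n)) ->
  forall eps, 0 < eps -> eventually (fun n => INR (K n) ^ 2 / INR (P n) * ln (INR n) < eps).
Proof.
move=> hL hLa; have hf : 0 < INR s`! by apply/INR_gt0/fact_gt0.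
apply: (@eventually_lt_of_pow _ s) => // [|eps he].
  apply: (filter_imp _ (eventually_ln_gt 0)) => n hl; apply: Rmult_le_pos; last lra.
  by apply: Rdiv_le_0_compat; [apply: pow2_ge_0 | have := K_ge1 n; have := K_le_P n; lra].
have hfL : 0 < INR s`! * L by apply: Rmult_lt_0_compat.
apply: (filter_imp _ (filter_and (filter_and hLa (eventually_ln_gt 0)) (filter_and
  (eventually_INR_gt 0) (eventually_ln_pow_div_lt s.+1 (Rdiv_lt_0_compat _ _ he hfL)))))
  => n [[han hl] [hn hpow]].
(* [(K^2/P)^s = s! a <= s! L ln n / n] *)
rewrite Rpow_mult_distr.
have -> : (INR (K n) ^ 2 / INR (P n)) ^ s = INR s`! * a n.
  by rewrite approx_probE; field; lra.
apply: (@Rle_lt_trans _ (INR s`! * L * (ln (INR n) ^ s.+1 / INR n))).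
  have ha : a n <= L * ln (INR n) / INR n by rewrite -Rle_div_r //; lra.
  have -> : INR s`! * L * (ln (INR n) ^ s.+1 / INR n) =
    INR s`! * (L * ln (INR n) / INR n) * ln (INR n) ^ s by rewrite /=; field; lra.
  apply: Rmult_le_compat_r; first by apply: pow_le; lra.
  by apply: Rmult_le_compat_l; lra.
by move: hpow; rewrite -(Rlt_div_r _ _ _ hfL) Rmult_comm.
Qed.

Lemma eventually_sigma_ln_lt eps : 0 < eps ->
  eventually (fun n => INR s ^ 2 / INR (P n) * ln (INR n) < eps).
Proof.
move=> he; have hs2 : 0 < INR s ^ 2 by apply: pow_lt; apply: INR_gt0.
have hec : 0 < eps * c / INR s ^ 2 by apply: Rdiv_lt_0_compat => //; nra.
apply: (filter_imp _ (filter_and (filter_and P_ge (eventually_ln_gt 0))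
  (filter_and (eventually_INR_gt 0) (eventually_ln_pow_div_lt 1 hec)))) => n [[hP hl] [hn h]].
have hp : 0 < INR (P n) by nra.
rewrite pow_1 in h; apply: (@Rle_lt_trans _ (INR s ^ 2 / c * (ln (INR n) / INR n))).
  have -> : INR s ^ 2 / c * (ln (INR n) / INR n) = INR s ^ 2 * ln (INR n) / (c * INR n).
    by field; lra.
  rewrite /Rdiv Rmult_assoc [/ _ * _]Rmult_comm -Rmult_assoc.
  by apply: Rmult_le_compat_l; [nra | apply: Rinv_le_contravar; nra].
rewrite -(Rlt_div_r _ _ _ hs2) in h; apply: (Rmult_lt_reg_r c) => //.
by have -> : INR s ^ 2 / c * (ln (INR n) / INR n) * c = ln (INR n) / INR n * INR s ^ 2;
  [field; lra | lra].
Qed.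

Lemma eventually_eps_ln_lt b : 0 < b -> eventually (fun n => b <= INR n * a n) ->
  forall eps, 0 < eps ->
  eventually (fun n => INR s * (INR s - 1) / INR (K n) * ln (INR n) < eps).
Proof.
move=> hb hba eps he; have [->|s2] := eqVneq s 1%N.
  by apply: filter_forall => n; rewrite /= Rminus_diag Rmult_0_r Rdiv_0_l Rmult_0_l.
have s2' : (2 <= s)%N by lia.
have hs2 : INR 2 <= INR s by apply: INR_leq.
have hss : 0 < INR s * (INR s - 1) by rewrite /= in hs2; nra.
apply: (filter_imp _ (eventually_ln_div_K_lt s2' hb hba (Rdiv_lt_0_compat _ _ he hss))) => n h.
have hk := K_ge1 n.
have -> : INR s * (INR s - 1) / INR (K n) * ln (INR n) =
  INR s * (INR s - 1) * (ln (INR n) / INR (K n)) by field; lra.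
by move: h; rewrite -Rlt_div_r // Rmult_comm.
Qed.

Local Notation err n := (rel_err s (K n) (P n)).

Lemma err_ge0 n : 0 <= err n.
Proof. by have [sK KP] := sKP n; apply: rel_err_ge0 KP; lia. Qed.

Section Bounded.
Variables (L b : R).
Hypotheses (L_gt0 : 0 < L) (b_gt0 : 0 < b).
Hypothesis a_le : eventually (fun n => INR n * a n <= L * ln (INR n)).
Hypothesis a_ge : eventually (fun n => b <= INR n * a n).

Lemma eventually_err_ln_lt eps : 0 < eps -> eventually (fun n => err n * ln (INR n) < eps).
Proof.
move=> he.
have h1 := eventually_x_ln_lt L_gt0 a_le (ltac:(lra) : 0 < eps / 12).
have h2 := eventually_sigma_ln_lt (ltac:(lra) : 0 < eps / 6).
have h3 := eventually_eps_ln_lt b_gt0 a_ge (ltac:(lra) : 0 < eps / 6).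
apply: (filter_imp _ (filter_and h1 (filter_and h2 h3))) => n [h1n [h2n h3n]].
by rewrite /rel_err; lra.
Qed.

Lemma eventually_err_lt eps : 0 < eps -> eventually (fun n => err n < eps).
Proof.
move=> he; apply: (filter_imp _ (filter_and (eventually_err_ln_lt he)
  (eventually_ln_gt 1))) => n [h1 h2].
by have := err_ge0 n; nra.
Qed.

Lemma eventually_dist_le :
  eventually (fun n => Rabs (q n - a n) <= a n * err n).
Proof.
have h := eventually_err_lt (ltac:(lra) : 0 < 1/8).
apply: (filter_imp _ h) => n he.
by have [sK KP] := sKP n; apply: edge_prob_dist_le => //; lra.
Qed.

Lemma edge_prob_asymp : asymp_eq (fun n => q n) (fun n => a n) /\
  little_o_inv_n (fun n => q n - a n).
Proof.
split=> eps he.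
- have [N hN] := filter_and eventually_dist_le (eventually_err_lt he).
  exists N => n /hN [hd herr]; rewrite /R_dist.
  have ha := a_gt0 n.
  have -> : q n / a n - 1 = (q n - a n) / a n by field; lra.
  rewrite Rabs_div; last lra.
  by rewrite (Rabs_right (a n)) ?Rlt_div_l; nra.
- have hLe : 0 < eps / L by apply: Rdiv_lt_0_compat.
  have [N hN] := filter_and eventually_dist_le (filter_and a_le
    (filter_and (eventually_err_ln_lt hLe) (eventually_INR_gt 0))).
  exists N => n /hN [hd [han [herr hn]]]; rewrite /R_dist Rminus_0_r.
  have ha := a_gt0 n; have he0 := err_ge0 n.
  rewrite Rabs_right; last by apply/Rle_ge/Rmult_le_pos; [lra | apply: Rabs_pos].
  apply: (@Rle_lt_trans _ (L * ln (INR n) * err n)).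
    apply: Rle_trans (_ : INR n * (a n * err n) <= _).
      by apply: Rmult_le_compat_l; lra.
    by rewrite -Rmult_assoc; apply: Rmult_le_compat_r.
  by move: herr; rewrite -(Rlt_div_r _ _ _ L_gt0); lra.
Qed.
End Bounded.

Section EdgeBounded.
Hypothesis q_between :
  eventually (fun n => 1/4 <= INR n * q n /\ INR n * q n <= 2 * ln (INR n)).

Lemma eventually_P_gt A : eventually (fun n => A < INR (P n)).
Proof.
apply: (filter_imp _ (filter_and P_ge (eventually_INR_gt (A / c)))) => n [hP hn].
by rewrite (Rlt_div_l _ _ _ c_gt0) in hn; lra.
Qed.

Lemma eventually_q_lt eps : 0 < eps -> eventually (fun n => q n < eps).
Proof.
move=> he; apply: (filter_imp _ (filter_and q_between (filter_and (eventually_INR_gt 0)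
  (eventually_ln_pow_div_lt 1 (Rdiv_lt_0_compat _ _ he Rlt_0_2))))) => n [[_ hq] [hn hl]].
rewrite pow_1 (Rlt_div_l _ _ _ hn) in hl.
by apply: (Rmult_lt_reg_l (INR n)) => //; lra.
Qed.

Lemma eventually_sparse : eventually (fun n => 16 * INR (K n) ^ 2 <= INR (P n)).
Proof.
have hs1 : 1 <= INR s by apply: INR_ge1.
set kappa := / (INR s * (4 * INR s / (1/16)) ^ s + 1).
have hkappa : 0 < kappa.
  apply: Rinv_0_lt_compat; have : 0 <= (4 * INR s / (1/16)) ^ s by apply: pow_le; lra.
  by nra.
(* in the dense regime [q n] would stay above [kappa], but [q n] tends to 0 *)
apply: (filter_imp _ (filter_and (eventually_q_lt hkappa)
  (eventually_P_gt (64 * INR s ^ 2)))) => n [hq hP].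
case: (Rle_lt_dec (16 * INR (K n) ^ 2) (INR (P n))) => // hKP; exfalso.
have [sK KP] := sKP n; have hk := K_ge1 n.
have h2s : (2 * s <= K n)%N.
  apply: leq_of_INR; rewrite INR_mul [INR 2]/=.
  have : (2 * INR s) ^ 2 < INR (K n) ^ 2 by lra.
  have := pos_INR s; nra.
have := edge_prob_ge_dense s_gt0 h2s KP (ltac:(lra) : 0 < 1/16 <= 1) ltac:(lra).
by rewrite -/kappa; lra.
Qed.

Lemma eventually_approx_ge : eventually (fun n => 1/8 <= INR n * a n).
Proof.
have hs1 : 1 <= INR s by apply: INR_ge1.
apply: (filter_imp _ (filter_and (filter_and q_between eventually_sparse)
  (filter_and (eventually_P_gt (16 * INR s ^ 2)) (eventually_INR_gt 0))))
  => n [[[hq _] hKP] [hsP hn]].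
have [sK KP] := sKP n; have hp : 0 < INR (P n) by nra.
have hup := edge_prob_le s_gt0 sK KP hKP (Rlt_le _ _ hsP).
have hx : INR (K n) ^ 2 / INR (P n) <= 1/16 by rewrite (Rle_div_l _ _ _ hp); lra.
have hsg : INR s ^ 2 / INR (P n) <= 1/16 by rewrite (Rle_div_l _ _ _ hp); lra.
have ha := a_gt0 n.
have : q n <= 2 * a n by nra.
by nra.
Qed.

Lemma eventually_approx_le : eventually (fun n => INR n * a n <= 4 * ln (INR n)).
Proof.
have heps := eventually_eps_ln_lt (ltac:(lra) : 0 < 1/8) eventually_approx_ge
  (ltac:(lra) : 0 < 1/8).
apply: (filter_imp _ (filter_and (filter_and q_between eventually_sparse)
  (filter_and heps (filter_and (eventually_ln_gt 1) (eventually_INR_gt 0)))))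
  => n [[[_ hq] hKP] [he [hl hn]]].
have [sK KP] := sKP n; have hp : 0 < INR (P n) by have := K_ge1 n; nra.
have hlo := edge_prob_ge s_gt0 sK KP hKP.
have hx : INR (K n) ^ 2 / INR (P n) <= 1/16 by rewrite (Rle_div_l _ _ _ hp); lra.
have hs1 : 1 <= INR s by apply: INR_ge1.
have he1 : INR s * (INR s - 1) / INR (K n) <= 1/8.
  have : 0 <= INR s * (INR s - 1) / INR (K n).
    by apply: Rdiv_le_0_compat; [nra | have := K_ge1 n; lra].
  by nra.
have ha := a_gt0 n.
have : a n <= 2 * q n by nra.
by nra.
Qed.
End EdgeBounded.
End Asymptotics.

Theorem lemma8 (s : nat) (K P : nat -> nat)
  (hs : (1 <= s)%coq_nat)
  (hK : forall n, (s <= K n)%coq_nat /\ (K n <= P n)%coq_nat)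
  (hP : bigOmega_n P) :
  ((exists gamma : nat -> R, bigO_lnln gamma /\
      forall n : nat, (1 <= n)%coq_nat ->
        approx_prob s (K n) (P n) = (ln (INR n) + gamma n) / INR n) ->
    asymp_eq (fun n => edge_prob s (K n) (P n)) (fun n => approx_prob s (K n) (P n)) /\
    little_o_inv_n (fun n => edge_prob s (K n) (P n) - approx_prob s (K n) (P n)))
  /\
  ((exists gamma : nat -> R, bigO_lnln gamma /\
      forall n : nat, (1 <= n)%coq_nat ->
        edge_prob s (K n) (P n) = (ln (INR n) + gamma n) / INR n) ->
    asymp_eq (fun n => edge_prob s (K n) (P n)) (fun n => approx_prob s (K n) (P n)) /\
    little_o_inv_n (fun n => edge_prob s (K n) (P n) - approx_prob s (K n) (P n))).
Proof.
have s1 : (1 <= s)%N by apply/leP.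
have sKP n : (s <= K n)%N /\ (K n <= P n)%N by have [] := hK n; split; apply/leP.
have [c [c_gt0 [N hN]]] := hP.
have P_ge : eventually (fun n => c * INR n <= INR (P n)) by exists N => n /leP /hN.
split=> /lnln_perturbation_bounds between.
- apply: (edge_prob_asymp s1 sKP c_gt0 P_ge (ltac:(lra) : 0 < 2) (ltac:(lra) : 0 < 1/4)).
  + by apply: (filter_imp _ between) => n [].
  + by apply: (filter_imp _ between) => n [].
- apply: (edge_prob_asymp s1 sKP c_gt0 P_ge (ltac:(lra) : 0 < 4) (ltac:(lra) : 0 < 1/8)).
  + exact: eventually_approx_le s1 sKP c_gt0 P_ge between.
  + exact: eventually_approx_ge s1 sKP c_gt0 P_ge between.
Qed.
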